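(* Let $G=(V,A)$ be a directed graph and $R,T\subseteq V$ with $R\cap T=\emptyset$. Let $\mathcal{Y}(G)=(\hat V,\hat A)$ be the forking of $G$, and let $\hat R=\{(r,0)\mid r\in R\}$ and $\hat T=\{(t,0)\mid t\in T\}$. Then there is a solution $S\subseteq V\setminus(R\cup T)$ of size at most $k$ for $(G,R,T)$ if and only if there is a solution $\hat S\subseteq \hat V$ of size at most $2k+|R\cup T|$ for $(\mathcal{Y}(G),\hat R,\hat T)$.
   Context: For a directed graph $G=(V,A)$, its forking is the directed graph $\mathcal{Y}(G)=(\hat V,\hat A)$ with $\hat V=V\times\{0,1\}$ and $\hat A=\{((u,0),(v,1))\mid (u,v)\in A\}\cup\{((v,1),(v,0))\mid v\in V\}$. For a directed graph $H$ with vertex set $W$ and subsets $R,T\subseteq W$, a solution for $(H,R,T)$ is a set $S\subseteq W$ such that the induced subgraph $H[R\cup S\cup T]$ contains a directed path from $r$ to $t$ for every $r\in R$ and every $t\in R\cup T$. *)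

(* A finite directed graph is a finType V with an arc relation a : rel V. *)
From mathcomp Require Import all_boot.
Set Implicit Arguments. Unset Strict Implicit. Unset Printing Implicit Defensive.

Definition induced (W : finType) (a : rel W) (U : {set W}) : rel W :=
  [rel x y | [&& x \in U, y \in U & a x y]].

Definition solution (W : finType) (a : rel W) (R T S : {set W}) : Prop :=
  forall r t, r \in R -> t \in R :|: T ->
    connect (induced a (R :|: S :|: T)) r t.

(* The forking Y(G): vertices V × {0,1} (false = 0, true = 1); arcs
   (u,0)->(v,1) for (u,v) ∈ A and (v,1)->(v,0) for v ∈ V. *)
Definition fork (V : finType) (a : rel V) : rel (V * bool) :=
  fun x y =>
    match x, y with
    | (u, false), (v, true) => a u v
    | (u, true), (v, false) => u == v
    | _, _ => false
    end.

Definition hat0 (V : finType) (X : {set V}) : {set V * bool} :=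
  [set (x, false) | x in X].

(* Forking splits every vertex v into an entry (v,1) and an exit (v,0), joined
   by the arc (v,1) -> (v,0); an arc u -> v of G becomes (u,0) -> (v,1).  A
   path of G[R ∪ S ∪ T] therefore lifts to a path of Y(G) through both copies
   of S and through the entries of R ∪ T, which costs 2|S| + |R ∪ T| vertices.
   Conversely, a directed path of Y(G) between exits projects onto a path of G
   whose inner vertices have both copies in the fork solution.  Every vertex
   of R ∪ T except the chosen source r must be entered, so all but at most one
   entry of R ∪ T lies in the fork solution; the remaining budget of 2k + 1
   pays for at most k vertices outside R ∪ T with both copies. *)
From mathcomp Require Import all_boot zify.

Set Implicit Arguments.
Unset Strict Implicit.
Unset Printing Implicit Defensive.

Lemma connect_inv (T : finType) (e : rel T) (P : T -> Prop) x y :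
  (forall u v, P u -> e u v -> P v) -> P x -> connect e x y -> P y.
Proof.
move=> closedP Px /connectP[p ep ->].
elim: p x ep Px => //= z p IHp x /andP[exz ep] Px.
exact: IHp ep (closedP _ _ Px exz).
Qed.

Lemma connect_homo (T1 T2 : finType) (e1 : rel T1) (e2 : rel T2)
    (f : T1 -> T2) x y :
  (forall u v, e1 u v -> connect e2 (f u) (f v)) ->
  connect e1 x y -> connect e2 (f x) (f y).
Proof.
move=> fe; apply: (@connect_inv _ _ (fun v => connect e2 (f x) (f v))) => //.
by move=> u v cxu /fe; apply: connect_trans.
Qed.

Lemma connect_last_arc (T : finType) (e : rel T) x y :
  connect e x y -> x != y -> exists z, e z y.
Proof.
move=> cxy; have := @connect_inv _ e (fun v => v = x \/ exists z, e z v) x y.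
case=> // [u v _ euv | | -> ]; [by right; exists u | by left | by rewrite eqxx].
Qed.

Lemma induced_connect_sub (W : finType) (a : rel W) (U U' : {set W}) :
  U \subset U' -> subrel (connect (induced a U)) (connect (induced a U')).
Proof.
move=> /subsetP sUU'; apply: connect_sub => x y /and3P[xU yU axy].
by apply: connect1; rewrite /induced /= !sUU'.
Qed.

Lemma hat0P (V : finType) (X : {set V}) v b :
  ((v, b) \in hat0 X) = ~~ b && (v \in X).
Proof.
apply/imsetP/andP => [[x xX [-> ->]] // | [/negbTE -> vX]].
by exists v.
Qed.

Section Fork.

Variables (V : finType) (a : rel V).

Lemma fork_connect_lift (W : {set V}) u v :
  connect (induced a W) u v ->
  connect (induced (fork a) (setX W setT)) (u, false) (v, false).
Proof.
apply: (@connect_homo _ _ _ _ (fun w => (w, false))) => x y /and3P[xW yW axy].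
apply: (@connect_trans _ _ (y, true)); apply: connect1;
  by rewrite /induced /= !in_setX !in_setT ?xW yW /= ?eqxx.
Qed.

Lemma fork_connect_entry (U : {set V * bool}) x v :
  connect (induced (fork a) U) x (v, false) -> x != (v, false) ->
  (v, true) \in U.
Proof.
move=> cxv /(connect_last_arc cxv)[[w []] /and3P[wU _]] //= /eqP wv.
by rewrite -wv.
Qed.

Lemma fork_connect_project (U : {set V * bool}) u v :
  connect (induced (fork a) U) (u, false) (v, false) ->
  connect (induced a (u |: [set w | (w, false) \in U & (w, true) \in U])) u v.
Proof.
set W := _ |: _; pose reach w := (w \in W) && connect (induced a W) u w.
pose P (x : V * bool) :=
  if x.2 then exists2 w, reach w & a w x.1 else reach x.1.
move=> cuv; suff /andP[] : P (v, false) by [].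
apply: (connect_inv (P := P) _ _ cuv); last by rewrite /P /reach /= setU11 connect0.
move=> [x []] [y []] Px /and3P[xU yU] //= => [/eqP yx | axy];
  rewrite /P /= in Px *; last by exists x.
move: Px xU yU => [w /andP[wW cuw] awx]; rewrite -yx => xU1 xU0.
have xW : x \in W by rewrite !inE xU0 xU1 orbT.
rewrite /reach xW (connect_trans cuw) // connect1 //.
by rewrite /induced /= wW xW.
Qed.

End Fork.

Section Forward.

Variables (V : finType) (a : rel V) (R T S : {set V}).

Definition fork_lift : {set V * bool} := setX S setT :|: setX (R :|: T) [set true].

Lemma card_fork_lift : #|fork_lift| <= 2 * #|S| + #|R :|: T|.
Proof.
apply: leq_trans (leq_card_setU _ _) _.
by rewrite !cardsX cardsT card_bool cards1 muln1 mulnC.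
Qed.

Lemma solution_fork_lift :
  solution a R T S -> solution (fork a) (hat0 R) (hat0 T) fork_lift.
Proof.
move=> solS [r b] [t b']; rewrite hat0P => /andP[/negbTE -> rR].
rewrite in_setU !hat0P -andb_orr -in_setU => /andP[/negbTE -> tRT].
apply: induced_connect_sub (fork_connect_lift (solS r t rR tRT)).
apply/subsetP => -[w c]; rewrite !inE !hat0P /=.
by case: c; rewrite /= ?andbT ?orbF => /orP[/orP[] | ] ->; rewrite ?orbT.
Qed.

End Forward.

Section Backward.

Variables (V : finType) (a : rel V) (R T : {set V}) (Sh : {set V * bool}).

Definition fork_core : {set V} :=
  [set v in ~: (R :|: T) | ((v, false) \in Sh) && ((v, true) \in Sh)].

Definition fork_entries : {set V} := [set v in R :|: T | (v, true) \in Sh].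

Lemma card_fork_core : 2 * #|fork_core| + #|fork_entries| <= #|Sh|.
Proof.
have disj : setX fork_core setT :&: setX fork_entries [set true] = set0.
  apply/setP => -[v c]; rewrite !inE /=.
  by case: (_ || _); rewrite ?andbF.
have sub : setX fork_core setT :|: setX fork_entries [set true] \subset Sh.
  apply/subsetP => -[v c]; rewrite !inE /= => /orP[/andP[/and3P[_ v0 v1] _] |].
    by case: c.
  by case/andP=> /andP[_ v1] /eqP->.
apply: leq_trans (subset_leq_card sub).
have := cardsUI (setX fork_core setT) (setX fork_entries [set true]).
rewrite disj cards0 addn0 => ->.
by rewrite !cardsX cardsT card_bool cards1 muln1 mulnC.
Qed.

Hypothesis solSh : solution (fork a) (hat0 R) (hat0 T) Sh.

Lemma fork_connect_hat0 r t : r \in R -> t \in R :|: T ->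
  connect (induced (fork a) (hat0 R :|: Sh :|: hat0 T)) (r, false) (t, false).
Proof. by move=> rR tRT; apply: solSh; rewrite ?inE !hat0P // -in_setU. Qed.

Lemma card_fork_entries r : r \in R -> #|R :|: T| <= #|fork_entries| + 1.
Proof.
move=> rR; rewrite (cardsD1 r) addnC leq_add ?leq_b1 //.
apply/subset_leq_card/subsetP => v /setD1P[vr vRT].
rewrite inE vRT /=.
have /fork_connect_entry : connect _ (r, false) (v, false) := fork_connect_hat0 rR vRT.
rewrite !in_setU !hat0P /= orbF; apply.
by apply: contra_neq vr => -[->].
Qed.

Lemma solution_fork_core : solution a R T fork_core.
Proof.
move=> r t rR tRT.
apply: induced_connect_sub (fork_connect_project (fork_connect_hat0 rR tRT)).
apply/subsetP => w; rewrite !inE !hat0P /= orbF.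
case/orP => [/eqP -> | /andP[]]; first by rewrite rR.
by case: (w \in R) (w \in T) => [] []; rewrite /= ?orbT ?orbF => // -> ->.
Qed.

End Backward.

Lemma solution_unfork (V : finType) (a : rel V) (R T : {set V})
    (Sh : {set V * bool}) (k : nat) :
  #|Sh| <= 2 * k + #|R :|: T| -> solution (fork a) (hat0 R) (hat0 T) Sh ->
  exists S : {set V},
    [/\ S \subset ~: (R :|: T), #|S| <= k & solution a R T S].
Proof.
move=> cardSh solSh; have [R0 | [r rR]] := set_0Vmem R.
  by exists set0; split; rewrite ?sub0set ?cards0 // => r t; rewrite R0 inE.
exists (fork_core R T Sh); split; last exact: solution_fork_core.
  by apply/subsetP => v; rewrite inE => /andP[].
have := card_fork_core R T Sh; have := card_fork_entries solSh rR; lia.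
Qed.

Theorem lemma5 (V : finType) (a : rel V) (R T : {set V}) (k : nat) :
  R :&: T = set0 ->
  (exists S : {set V},
      [/\ S \subset ~: (R :|: T), #|S| <= k & solution a R T S])
  <->
  (exists Sh : {set V * bool},
      #|Sh| <= 2 * k + #|R :|: T| /\ solution (fork a) (hat0 R) (hat0 T) Sh).
Proof.
move=> _; split; last by case=> Sh [cardSh /(solution_unfork cardSh)].
case=> S [_ cardS solS]; exists (fork_lift R T S); split.
  by apply: leq_trans (card_fork_lift R T S) _; rewrite leq_add2r leq_mul2l cardS.
exact: solution_fork_lift.
Qed.
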